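(* In the discrete-covariate setting below, assume Assumptions T and W. Fix $C_0\ge 1$ and let $\tilde\beta_j^l(\mathbf z)$ be a minimizer of $$\sum_{k=1}^n \mathrm w_l(\mathbf z_k)\,(\beta_j^*(\mathbf z_k)-\beta)^{\mathrm T}\,\Sigma^*_{-j,-j}(\mathbf z_k)\,(\beta_j^*(\mathbf z_k)-\beta)$$ over $\{\beta\in\mathbb R^{p-1}:\|\beta\|_0\le C_0s_j^*\}$. Then there is a constant $c>0$ such that for $j=1,\dots,p$ and every subject $l$ (with $n>n_l$), $$\|\tilde\beta_j^l(\mathbf z)-\beta_j^*(\mathbf z_l)\|_2^2\le c\,\exp\!\big(-2\delta_l^2/\tau^2+2\log(n/n_l-1)\big)\,s_j^*.$$
   Context: Discrete-covariate setting. There are $n$ subjects with covariates $\mathbf z_i$ taking $K$ distinct values (levels); $n_l$ denotes the number of subjects sharing the covariate value $\mathbf z_l$ of subject $l$. $\mathbf X\in\mathbb R^{n\times p}$ has rows $\mathbf x_i$; given the covariates, the $\mathbf x_i$ are independent with $\mathbf x_i\sim\mathcal N_p(0,\Omega^*(\mathbf z_i)^{-1})$; $\Sigma^*(\mathrm z)=\Omega^*(\mathrm z)^{-1}$, $\Sigma^*_{-j,-j}$ is it with row/column $j$ removed; $\beta_j^*(\mathrm z)\in\mathbb R^{p-1}$ is the true regression coefficient of variable $j$ on the others ($\beta^*_{jk}=-\Omega^*_{kj}/\Omega^*_{jj}$), with conditional variance $\sigma_*^2$ known. Weights: $\mathrm w_l(\mathbf z_k)=c_lK((\mathbf z_k-\mathbf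 z_l)/\tau)/\tau$, $c_l>0$ constant. $\tilde\beta^l_j$ as defined is the constrained Kullback–Leibler minimizer of the weighted pseudo-likelihood. $\delta_l=\min_{k:\mathbf z_k\ne\mathbf z_l}|\mathbf z_k-\mathbf z_l|$. Assumption T: for each covariate value $\mathrm z$, $\Omega^*(\mathrm z)$ has eigenvalues bounded away from $0$ and $\infty$, and $\|\beta_j^*(\mathrm z)\|_0\le s_j^*$; $s^*=\max_js_j^*$. Assumption W: $\delta_l$ is bounded below by a positive constant for all levels; the kernel is Gaussian, $K(x)\propto e^{-x^2}$; and $\tau=c\min_l\delta_l/\sqrt{\log n}$ for some constant $c\in(0,1)$. *)

From HB Require Import structures.
From mathcomp Require Import all_boot all_order all_algebra.
From mathcomp Require Import all_classical all_reals.
From mathcomp Require Import all_analysis.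
Set Implicit Arguments. Unset Strict Implicit. Unset Printing Implicit Defensive.
Import Order.TTheory GRing.Theory Num.Theory.
Local Open Scope ring_scope.

Section Defs.
Variable R : realType.

Definition l0norm (m : nat) (v : 'rV[R]_m) : nat := #|[set i | v 0 i != 0]|.

Definition sqnorm2 (m : nat) (v : 'rV[R]_m) : R := \sum_i (v 0 i) ^+ 2.

(* With p.+1 variables indexed by 'I_p.+1, the other variables of j are
   indexed by 'I_p via lift j. *)
Definition subm_mj (p : nat) (S : 'M[R]_p.+1) (j : 'I_p.+1) : 'M[R]_p :=
  \matrix_(a, b) S (lift j a) (lift j b).

(* beta*_j : regression coefficients of variable j on the others,
   beta*_{jk} = - Omega_{kj} / Omega_{jj}. *)
Definition beta_star (p : nat) (Om : 'M[R]_p.+1) (j : 'I_p.+1) : 'rV[R]_p :=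
  \row_a (- Om (lift j a) j / Om j j).

Definition Sigma_mj (p : nat) (Om : 'M[R]_p.+1) (j : 'I_p.+1) : 'M[R]_p :=
  subm_mj (invmx Om) j.

Definition qform (p : nat) (S : 'M[R]_p) (v : 'rV[R]_p) : R :=
  (v *m S *m v^T) 0 0.

Definition nlev (n : nat) (z : 'I_n -> R) (l : 'I_n) : nat :=
  #|[set k | z k == z l]|.

(* The default of the iterated
   minimum is max_k |z_k - z_l|, which is itself one of the gaps whenever some
   z_k <> z_l, so delta_l is the genuine minimum in that case. *)
Definition delta (n : nat) (z : 'I_n -> R) (l : 'I_n) : R :=
  \big[Num.min/(\big[Num.max/0]_k `|z k - z l|)]_(k | z k != z l) `|z k - z l|.

(* min_l delta_l (for n >= 1; default is max_l delta_l, itself a term) *)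
Definition min_delta (n : nat) (z : 'I_n -> R) : R :=
  \big[Num.min/(\big[Num.max/0]_l delta z l)]_l delta z l.

(* Gaussian kernel K(x) = exp(-x^2) (normalising constant absorbed in c_l) *)
Definition gaussK (x : R) : R := expR (- x ^+ 2).

Definition weight (n : nat) (z : 'I_n -> R) (cl : 'I_n -> R) (tau : R)
  (l k : 'I_n) : R := cl l * gaussK ((z k - z l) / tau) / tau.

Definition objective (n p : nat) (z : 'I_n -> R) (Om : R -> 'M[R]_p.+1)
  (cl : 'I_n -> R) (tau : R) (j : 'I_p.+1) (l : 'I_n) (b : 'rV[R]_p) : R :=
  \sum_k weight z cl tau l k *
     qform (Sigma_mj (Om (z k)) j) (beta_star (Om (z k)) j - b).

Definition constrained_minimizer (n p : nat) (z : 'I_n -> R)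
  (Om : R -> 'M[R]_p.+1) (cl : 'I_n -> R) (tau : R) (j : 'I_p.+1) (l : 'I_n)
  (C0 : R) (s : nat) (b : 'rV[R]_p) : Prop :=
  (l0norm b)%:R <= C0 * s%:R /\
  forall b' : 'rV[R]_p, (l0norm b')%:R <= C0 * s%:R ->
    objective z Om cl tau j l b <= objective z Om cl tau j l b'.

End Defs.

(* Write u for the error of the constrained minimizer relative to beta*_j(z_l).
   Since beta*_j(z_l) is itself feasible, comparing the two objective values
   gives  sum_k w_k u' S_k u <= 2 sum_k w_k u' S_k (beta*_j(z_k) - beta*_j(z_l)),
   where only subjects at other covariate levels contribute on the right.  The
   left side is at least n_l w_0 |u|^2 / lambda_max, w_0 being the weight of
   the own level, while each term on the right is controlled by Young's
   inequality, the eigenvalue bounds on Sigma*, and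
   |beta*_j|^2 <= s_j (lambda_max / lambda_min)^2.  Optimising the Young
   parameter gives |u|^2 <~ s_j (W / (n_l w_0))^2 with W the total weight of
   the other levels.  The Gaussian kernel makes each such weight at most
   w_0 exp(-delta_l^2 / tau^2), so W / (n_l w_0) <= exp(-delta_l^2 / tau^2) (n / n_l - 1). *)

From HB Require Import structures.
From mathcomp Require Import all_boot all_order all_algebra.
From mathcomp Require Import all_classical all_reals all_analysis.
From mathcomp Require Import complex ring lra.
Import Order.TTheory GRing.Theory Num.Theory.
Set Implicit Arguments. Unset Strict Implicit. Unset Printing Implicit Defensive.
Local Open Scope ring_scope.

Section BilinearForm.
Variables (R : realType) (m : nat).
Implicit Types (S : 'M[R]_m) (x y : 'rV[R]_m).

Definition bform S x y : R := (x *m S *m y^T) 0 0.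

Lemma qformE S x : qform S x = bform S x x. Proof. by []. Qed.

Lemma bformC S x y : S^T = S -> bform S x y = bform S y x.
Proof.
have tr1 (M : 'M[R]_1) : M 0 0 = M^T 0 0 by rewrite mxE.
by move=> S_sym; rewrite /bform tr1 !trmx_mul trmxK S_sym mulmxA.
Qed.

Lemma bformBl S x1 x2 y : bform S (x1 - x2) y = bform S x1 y - bform S x2 y.
Proof. by rewrite /bform !mulmxBl !mxE. Qed.

Lemma bformBr S x y1 y2 : bform S x (y1 - y2) = bform S x y1 - bform S x y2.
Proof. by rewrite /bform linearB /= mulmxBr !mxE. Qed.

Lemma bformZl S t x y : bform S (t *: x) y = t * bform S x y.
Proof. by rewrite /bform -!scalemxAl !mxE. Qed.

Lemma bformx0 S x : bform S x 0 = 0.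
Proof. by rewrite /bform trmx0 mulmx0 mxE. Qed.

Lemma qformB S x y : S^T = S ->
  qform S (x - y) = qform S x - 2 * bform S x y + qform S y.
Proof. by move=> S_sym; rewrite !qformE bformBl !bformBr (bformC y x S_sym); ring. Qed.

Lemma bform_young S t x y : S^T = S -> (forall v, 0 <= qform S v) ->
  2 * t * bform S x y <= t ^+ 2 * qform S x + qform S y.
Proof.
move=> S_sym S_psd; rewrite -subr_ge0.
have := S_psd (t *: x - y); rewrite qformB // !qformE !bformZl (bformC x _ S_sym).
by rewrite bformZl; congr (0 <= _); ring.
Qed.

Lemma sqnorm2E x : sqnorm2 x = (x *m x^T) 0 0.
Proof. by rewrite /sqnorm2 mxE; apply: eq_bigr => i _; rewrite mxE expr2. Qed.

Lemma sqnorm2_ge0 x : 0 <= sqnorm2 x.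
Proof. by apply: sumr_ge0 => i _; apply: sqr_ge0. Qed.

Lemma sqnorm2_sub_le x y : sqnorm2 (x - y) <= 2 * sqnorm2 x + 2 * sqnorm2 y.
Proof.
rewrite /sqnorm2 !mulr_sumr -big_split /=; apply: ler_sum => i _.
rewrite !mxE -subr_ge0 (_ : _ - _ = (x 0 i + y 0 i) ^+ 2) ?sqr_ge0 //; ring.
Qed.

Lemma sqnorm2_le_l0norm x K : (forall i, x 0 i ^+ 2 <= K) ->
  sqnorm2 x <= (l0norm x)%:R * K.
Proof.
move=> x_le; rewrite /sqnorm2 (bigID (fun i => x 0 i != 0)) /=.
rewrite [X in _ + X]big1 ?addr0; last by move=> i /negPn/eqP ->; rewrite expr0n.
apply: le_trans (ler_sum _ (fun i _ => x_le i)) _.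
by rewrite sumr_const mulr_natl /l0norm cardsE.
Qed.

Lemma bform_delta S a b : bform S (delta_mx 0 a) (delta_mx 0 b) = S a b.
Proof. by rewrite /bform trmx_delta -rowE -colE !mxE. Qed.

Lemma sqnorm2_delta (a : 'I_m) : sqnorm2 (delta_mx 0 a : 'rV[R]_m) = 1.
Proof. by rewrite sqnorm2E trmx_delta -rowE !mxE !eqxx. Qed.

End BilinearForm.

Section SpectralBounds.
Variable R : realType.
Local Notation toC := (real_complex R).
Local Open Scope sesquilinear_scope.

Lemma conj_real_complex (x : R) : (toC x)^* = toC x.
Proof. exact: conjc_real. Qed.

Lemma eigenvalue_conj_diag (F : fieldType) n (P : 'M[F]_n) (D : 'rV[F]_n) i :
  P \in unitmx -> eigenvalue (invmx P *m diag_mx D *m P) (D 0 i).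
Proof.
move=> P_unit; apply/eigenvalueP; exists (row i P).
  by rewrite !mulmxA rowE mulmxK // -rowE row_diag_mx -scalemxAl.
rewrite rowE mulmx_free_eq0 ?row_free_unit //.
by apply/eqP => /matrixP/(_ 0 i); rewrite !mxE !eqxx => /eqP; rewrite oner_eq0.
Qed.

Lemma sym_qform_bounds m (A : 'M[R]_m) (a b : R) :
  A^T = A -> (forall e, eigenvalue A e -> a <= e /\ e <= b) ->
  forall y, a * sqnorm2 y <= qform A y /\ qform A y <= b * sqnorm2 y.
Proof.
(* Diagonalise A unitarily over R[i]: with w := y P^*, both sides become sums
   over the eigenvalues D_i weighted by |w_i|^2. *)
move=> A_sym A_eig y.
set AC := map_mx toC A.
have AC_herm : AC \is hermsymmx.
  rewrite is_hermitianmxE expr0 scale1r; apply/eqP/matrixP => i k.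
  by rewrite !mxE conj_real_complex -[in LHS]A_sym mxE.
have /orthomx_spectralP AC_diag := hermitian_normalmx AC_herm.
set P := spectralmx AC in AC_diag; set D := spectral_diag AC in AC_diag.
have P_unitary : P \is unitarymx := spectral_unitarymx AC.
have P_unit : P \in unitmx := spectral_unit AC.
have D_real : D \is a realmx := hermitian_spectral_diag_real AC_herm.
have D_bounds i : exists2 k, D 0 i = toC k & a <= k /\ k <= b.
  have /mxOverP/(_ 0 i)/complex_realP [k Dk] := D_real.
  exists k => //; apply: A_eig.
  by have := eigenvalue_conj_diag D i P_unit; rewrite -AC_diag Dk eigenvalue_map.
set yC := map_mx toC y; set w := yC *m P^t*.
(* [y] is real, so conjugating [w] only conjugates [P^t*] back to [P]. *)
have wC : w^t* = P *m yC^T.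
  apply/matrixP => r c; rewrite !mxE rmorph_sum; apply: eq_bigr => k _.
  by rewrite !mxE rmorphM /= conjCK conj_real_complex mulrC.
have w_sum (d : 'rV[R[i]]_m) :
    (w *m diag_mx d *m w^t*) 0 0 = \sum_i d 0 i * (w 0 i * (w 0 i)^*).
  by rewrite mul_mx_diag !mxE; apply: eq_bigr => i _; rewrite !mxE mulrCA mulrA.
have toC_entry (M : 'M[R]_1) : toC (M 0 0) = (map_mx toC M) 0 0 by rewrite mxE.
have qformC : toC (qform A y) = \sum_i D 0 i * (w 0 i * (w 0 i)^*).
  rewrite -w_sum wC toC_entry !map_mxM map_trmx -/yC -/AC AC_diag.
  by rewrite invmx_unitary // !mulmxA.
have sqnormC : toC (sqnorm2 y) = \sum_i (w 0 i * (w 0 i)^*).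
  rewrite sqnorm2E toC_entry map_mxM -map_trmx -/yC.
  have -> : yC *m yC^T = w *m w^t*.
    by rewrite wC /w -mulmxA (mulmxA _ P) -invmx_unitary // mulVmx // mul1mx.
  rewrite -[w in w *m _]mulmx1 -diag_const_mx w_sum.
  by apply: eq_bigr => i _; rewrite mxE mul1r.
split; rewrite -lecR rmorphM /= qformC sqnormC mulr_sumr; apply: ler_sum => i _;
  have [k -> [ak kb]] := D_bounds i; apply: ler_wpM2r; rewrite ?mulcJ_ge0 ?lecR //.
Qed.

End SpectralBounds.

Section DeleteCoordinate.
Variables (R : realType) (p : nat) (j : 'I_p.+1).
Local Notation E := (rowsub (lift j) 1%:M : 'M[R]_(p, p.+1)).

Lemma subm_mjE (S : 'M[R]_p.+1) : subm_mj S j = E *m S *m E^T.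
Proof.
rewrite trmx_mxsub trmx1 mulmx_colsub mulmx1 -rowsubE.
by apply/matrixP => a b; rewrite !mxE.
Qed.

Lemma mul_rowsub_lift_tr : E *m E^T = 1%:M.
Proof.
rewrite trmx_mxsub trmx1 mulmx_colsub mulmx1.
by apply/matrixP => a b; rewrite !mxE (inj_eq lift_inj).
Qed.

Lemma qform_subm_mj (S : 'M[R]_p.+1) x : qform (subm_mj S j) x = qform S (x *m E).
Proof. by rewrite /qform subm_mjE trmx_mul !mulmxA. Qed.

Lemma sqnorm2_mul_rowsub_lift (x : 'rV[R]_p) : sqnorm2 (x *m E) = sqnorm2 x.
Proof. by rewrite !sqnorm2E trmx_mul mulmxA -(mulmxA x) mul_rowsub_lift_tr mulmx1. Qed.

End DeleteCoordinate.

Section PrecisionMatrix.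
Variables (R : realType) (m : nat) (Om : 'M[R]_m) (lo hi : R).
Hypotheses (lo_gt0 : 0 < lo) (Om_sym : Om^T = Om)
  (Om_eig : forall e, eigenvalue Om e -> lo <= e /\ e <= hi).

Lemma precision_unit : Om \in unitmx.
Proof.
rewrite -row_free_unit -kermx_eq0; apply: contraT => ker_nz.
have : eigenvalue Om 0 by rewrite /eigenvalue /eigenspace raddf0 subr0.
by move=> /Om_eig [/(lt_le_trans lo_gt0)]; rewrite ltxx.
Qed.

Lemma invmx_eigen_bounds mu :
  eigenvalue (invmx Om) mu -> hi^-1 <= mu /\ mu <= lo^-1.
Proof.
move=> /eigenvalueP [v v_eig v_nz].
have v_mu : v = mu *: (v *m Om) by rewrite scalemxAl -v_eig mulmxKV ?precision_unit.
have mu_nz : mu != 0 by apply: contraNneq v_nz => mu0; rewrite v_mu mu0 scale0r.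
have /Om_eig [lo_le le_hi] : eigenvalue Om mu^-1.
  by apply/eigenvalueP; exists v => //; rewrite {2}v_mu scalerA mulVf // scale1r.
have muV_gt0 : 0 < mu^-1 := lt_le_trans lo_gt0 lo_le.
have hi_gt0 : 0 < hi := lt_le_trans muV_gt0 le_hi.
by rewrite -(invrK mu); split; rewrite lef_pV2 ?posrE.
Qed.

Lemma precision_diag_bounds a : lo <= Om a a /\ Om a a <= hi.
Proof.
have := sym_qform_bounds Om_sym Om_eig (delta_mx 0 a).
by rewrite qformE bform_delta sqnorm2_delta !mulr1.
Qed.

Lemma precision_entry_sqr_le a b : Om a b ^+ 2 <= hi ^+ 2.
Proof.
have Om_psd v : 0 <= qform Om v.
  have [+ _] := sym_qform_bounds Om_sym Om_eig v; apply: le_trans.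
  by rewrite mulr_ge0 ?sqnorm2_ge0 ?ltW.
have young t := bform_young t (delta_mx 0 a) (delta_mx 0 b) Om_sym Om_psd.
move: (young 1) (young (-1)); rewrite !qformE !bform_delta.
have [_ ha] := precision_diag_bounds a; have [_ hb] := precision_diag_bounds b.
by move=> y1 y2; nra.
Qed.

End PrecisionMatrix.

Section RegressionCoefficients.
Variables (R : realType) (p : nat) (Om : 'M[R]_p.+1) (lo hi : R) (j : 'I_p.+1).
Hypotheses (lo_gt0 : 0 < lo) (Om_sym : Om^T = Om)
  (Om_eig : forall e, eigenvalue Om e -> lo <= e /\ e <= hi).

Lemma precision_hi_gt0 : 0 < hi.
Proof.
have [lo_le le_hi] := precision_diag_bounds Om_sym Om_eig j.
exact: lt_le_trans lo_gt0 (le_trans lo_le le_hi).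
Qed.

Lemma Sigma_mj_sym : (Sigma_mj Om j)^T = Sigma_mj Om j.
Proof.
by rewrite /Sigma_mj subm_mjE !trmx_mul trmxK trmx_inv Om_sym mulmxA.
Qed.

Lemma qform_Sigma_mj_bounds x :
  hi^-1 * sqnorm2 x <= qform (Sigma_mj Om j) x /\
  qform (Sigma_mj Om j) x <= lo^-1 * sqnorm2 x.
Proof.
have Sigma_sym : (invmx Om)^T = invmx Om by rewrite trmx_inv Om_sym.
rewrite /Sigma_mj qform_subm_mj -(sqnorm2_mul_rowsub_lift j x).
exact: sym_qform_bounds Sigma_sym (invmx_eigen_bounds lo_gt0 Om_eig) _.
Qed.

Lemma sqnorm2_beta_star_le :
  sqnorm2 (beta_star Om j) <= (l0norm (beta_star Om j))%:R * (hi ^+ 2 / lo ^+ 2).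
Proof.
apply: sqnorm2_le_l0norm => a; rewrite mxE mulNr sqrrN expr_div_n.
have [lo_le _] := precision_diag_bounds Om_sym Om_eig j.
have Ojj_gt0 : 0 < Om j j := lt_le_trans lo_gt0 lo_le.
apply: ler_pM; rewrite ?invr_ge0 ?sqr_ge0 //.
  exact: precision_entry_sqr_le Om_sym Om_eig _ _.
rewrite lef_pV2 ?posrE ?exprn_gt0 // !expr2.
by apply: ler_pM; rewrite ?(ltW lo_gt0).
Qed.

End RegressionCoefficients.

Lemma young_tradeoff_le (R : realFieldType) (a B W M U X : R) :
  0 < a -> 0 < B -> 0 <= W -> 0 <= U -> a * U <= X ->
  (forall t, 0 < t -> t * X <= B * (t ^+ 2 * W * U + W * M)) ->
  U * a ^+ 2 <= 4 * B ^+ 2 * W ^+ 2 * M.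
Proof.
move=> a_gt0 B_gt0 W_ge0 U_ge0 aU_le tX_le.
have [W0|W_neq0] := eqVneq W 0.
  have := tX_le 1 ltr01; rewrite W0 !(mulr0, mul0r, addr0, mul1r) => X_le0.
  have aU_le0 : a * U <= 0 := le_trans aU_le X_le0.
  have -> : U = 0 by apply/eqP; rewrite eq_le U_ge0 andbT -(pmulr_rle0 _ a_gt0).
  by rewrite !mul0r expr0n /= mulr0 mul0r.
have W_gt0 : 0 < W by rewrite lt_def W_neq0.
(* the optimal Young parameter, for which [a = 2 t B W] *)
pose t := a / (2 * B * W).
have t_gt0 : 0 < t by rewrite divr_gt0 // !mulr_gt0.
have a_eq : a = 2 * t * B * W by rewrite /t; field; rewrite !lt0r_neq0.
have : t * (a * U) <= B * (t ^+ 2 * W * U + W * M).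
  by apply: le_trans (tX_le t t_gt0); rewrite ler_pM2l.
rewrite a_eq => tU_le.
have : B * W * (t ^+ 2 * U) <= B * W * M by nra.
rewrite ler_pM2l ?mulr_gt0 // => tU_leM.
have -> : U * (2 * t * B * W) ^+ 2 = 4 * B ^+ 2 * W ^+ 2 * (t ^+ 2 * U) by ring.
by apply: ler_wpM2l tU_leM; rewrite 2?mulr_ge0 ?sqr_ge0 ?ler0n.
Qed.

Lemma expR_two_gap (R : realType) (x y r : R) : 0 < r ->
  expR (- 2 * x / y + 2 * ln r) = (expR (- (x / y)) * r) ^+ 2.
Proof.
move=> r_gt0; rewrite (_ : _ + _ = 2%:R * - (x / y) + 2%:R * ln r); last by ring.
by rewrite expRD !expRM_natl lnK ?posrE // exprMn.
Qed.

Lemma natr_div_sub1 (R : numFieldType) (m n : nat) : (0 < m)%N -> (m <= n)%N ->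
  n%:R / m%:R - 1 = (n - m)%:R / m%:R :> R.
Proof. by move=> m_gt0 m_le; rewrite natrB // mulrBl divff // pnatr_eq0 -lt0n. Qed.

Section Levels.
Variables (R : realType) (n : nat) (z : 'I_n -> R) (l : 'I_n).

Lemma nlev_gt0 : (0 < nlev z l)%N.
Proof. by rewrite card_gt0; apply/set0Pn; exists l; rewrite inE. Qed.

Lemma sum_same_level_const (x : R) : \sum_(k | z k == z l) x = x * (nlev z l)%:R.
Proof. by rewrite sumr_const mulr_natr /nlev cardsE. Qed.

Lemma sum_other_level_const (x : R) :
  \sum_(k | z k != z l) x = x * (n - nlev z l)%:R.
Proof.
rewrite sumr_const mulr_natr; congr (_ *+ _).
rewrite (@eq_card _ _ [predC [pred k | z k == z l]]) => [|k]; last by rewrite !inE.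
have -> : nlev z l = #|[pred k | z k == z l]| by apply: eq_card => k; rewrite !inE.
by rewrite -[X in (X - _)%N]card_ord -(cardC [pred k | z k == z l]) addKn.
Qed.

Lemma delta_ge0 : 0 <= delta z l.
Proof. by apply: le_bigmin => [|k _]; [apply: bigmax_ge_id | apply: normr_ge0]. Qed.

Lemma delta_le_gap k : z k != z l -> delta z l <= `|z k - z l|.
Proof. by move=> zk; rewrite /delta (bigD1 k) //= ge_min lexx. Qed.

Lemma min_delta_ge (d : R) : (forall k, d <= delta z k) -> d <= min_delta z.
Proof.
move=> d_le; apply: le_bigmin => [|k _]; last exact: d_le.
by apply: le_trans (d_le l) _; apply: le_bigmax.
Qed.

End Levels.

Section KernelWeights.
Variables (R : realType) (n : nat) (z : 'I_n -> R) (cl : 'I_n -> R) (tau : R) (l : 'I_n).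
Hypotheses (tau_gt0 : 0 < tau) (cl_gt0 : 0 < cl l).
Local Notation w := (weight z cl tau l).

Lemma weightE k : w k = cl l / tau * gaussK ((z k - z l) / tau).
Proof. by rewrite /weight mulrAC. Qed.

Lemma weight_ge0 k : 0 <= w k.
Proof. by rewrite weightE mulr_ge0 ?divr_ge0 ?expR_ge0 ?ltW. Qed.

Lemma weight_same_level k : z k = z l -> w k = cl l / tau.
Proof. by move=> zk; rewrite weightE zk subrr mul0r /gaussK expr0n oppr0 expR0 mulr1. Qed.

Lemma weight_other_level_le k : z k != z l ->
  w k <= cl l / tau * expR (- (delta z l ^+ 2 / tau ^+ 2)).
Proof.
move=> zk; rewrite weightE ler_pM2l ?divr_gt0 // /gaussK ler_expR lerN2.
rewrite expr_div_n ler_wpM2r ?invr_ge0 ?sqr_ge0 //.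
rewrite -[X in _ <= X]real_normK ?num_real // ler_sqr ?nnegrE ?normr_ge0 ?delta_ge0 //.
exact: delta_le_gap.
Qed.

End KernelWeights.

Section ConstrainedMinimizer.
Variables (R : realType) (n p : nat) (z : 'I_n -> R) (Om : R -> 'M[R]_p.+1)
  (cl : 'I_n -> R) (tau lo hi C0 : R) (j : 'I_p.+1) (l : 'I_n) (s : nat).
Hypotheses (lo_gt0 : 0 < lo) (Om_sym : forall k, (Om (z k))^T = Om (z k))
  (Om_eig : forall k e, eigenvalue (Om (z k)) e -> lo <= e /\ e <= hi)
  (beta_sparse : forall k, (l0norm (beta_star (Om (z k)) j) <= s)%N)
  (tau_gt0 : 0 < tau) (cl_gt0 : 0 < cl l) (C0_ge1 : 1 <= C0).

Local Notation S k := (Sigma_mj (Om (z k)) j).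
Local Notation beta k := (beta_star (Om (z k)) j).
Local Notation w := (weight z cl tau l).
Local Notation obj := (objective z Om cl tau j l).
Local Notation far k := (z k != z l).

Lemma objective_shift b b' : obj b' =
  obj b - 2 * \sum_k w k * bform (S k) (b' - b) (beta k - b)
        + \sum_k w k * qform (S k) (b' - b).
Proof.
rewrite /objective mulr_sumr -sumrB -big_split /=; apply: eq_bigr => k _.
have -> : beta k - b' = (beta k - b) - (b' - b) by rewrite opprB addrA subrK.
rewrite qformB ?Sigma_mj_sym // (bformC _ _ (Sigma_mj_sym _ (Om_sym k))); ring.
Qed.

Lemma minimizer_excess_le bt : constrained_minimizer z Om cl tau j l C0 s bt ->
  \sum_k w k * qform (S k) (bt - beta l) <=
  2 * \sum_(k | far k) w k * bform (S k) (bt - beta l) (beta k - beta l).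
Proof.
move=> [_ bt_min].
have beta_feasible : (l0norm (beta l))%:R <= C0 * s%:R.
  by apply: le_trans (ler_peMl (ler0n _ _) C0_ge1); rewrite ler_nat.
have drop_same_level :
    \sum_k w k * bform (S k) (bt - beta l) (beta k - beta l) =
    \sum_(k | far k) w k * bform (S k) (bt - beta l) (beta k - beta l).
  rewrite (bigID (fun k => z k == z l)) /= big1 ?add0r // => k /eqP zk.
  by rewrite zk subrr bformx0 mulr0.
by have := bt_min _ beta_feasible; rewrite (objective_shift (beta l)) drop_same_level; lra.
Qed.

Lemma hi_gt0 : 0 < hi.
Proof. exact: precision_hi_gt0 j lo_gt0 (Om_sym l) (@Om_eig l). Qed.

Lemma qform_Sigma_mj_ge0 k v : 0 <= qform (S k) v.
Proof.
have [+ _] := qform_Sigma_mj_bounds j lo_gt0 (Om_sym k) (@Om_eig k) v; apply: le_trans.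
by rewrite mulr_ge0 ?sqnorm2_ge0 // invr_ge0 ltW ?hi_gt0.
Qed.

Lemma weighted_qform_ge u :
  (nlev z l)%:R * (cl l / tau) / hi * sqnorm2 u <= \sum_k w k * qform (S k) u.
Proof.
rewrite (bigID (fun k => z k == z l)) /= -[X in X <= _]addr0 lerD //; last first.
  by apply: sumr_ge0 => k _; rewrite mulr_ge0 ?weight_ge0 ?qform_Sigma_mj_ge0.
rewrite (eq_bigr (fun=> cl l / tau * qform (S l) u)) => [|k /eqP zk]; last first.
  by rewrite weight_same_level // zk.
have [qform_ge _] := qform_Sigma_mj_bounds j lo_gt0 (Om_sym l) (@Om_eig l) u.
rewrite sum_same_level_const [X in _ <= X]mulrAC.
rewrite (_ : _ * sqnorm2 u = cl l / tau * (nlev z l)%:R * (hi^-1 * sqnorm2 u)); last by ring.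
by rewrite ler_pM2l ?mulr_gt0 ?invr_gt0 ?ltr0n ?nlev_gt0.
Qed.

Lemma sqnorm2_beta_sub_le k :
  sqnorm2 (beta k - beta l) <= 4 * s%:R * (hi ^+ 2 / lo ^+ 2).
Proof.
have beta_le k' : sqnorm2 (beta k') <= s%:R * (hi ^+ 2 / lo ^+ 2).
  apply: le_trans (sqnorm2_beta_star_le j lo_gt0 (Om_sym k') (@Om_eig k')) _.
  by rewrite ler_wpM2r ?divr_ge0 ?sqr_ge0 // ler_nat.
by apply: le_trans (sqnorm2_sub_le _ _) _; move: (beta_le k) (beta_le l); lra.
Qed.

Lemma weighted_bform_le u d M t : 0 < t -> (forall k, sqnorm2 (d k) <= M) ->
  t * (2 * \sum_(k | far k) w k * bform (S k) u (d k)) <=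
  lo^-1 * (t ^+ 2 * (\sum_(k | far k) w k) * sqnorm2 u + (\sum_(k | far k) w k) * M).
Proof.
move=> t_gt0 d_le.
have -> : lo^-1 * (t ^+ 2 * (\sum_(k | far k) w k) * sqnorm2 u + (\sum_(k | far k) w k) * M)
    = \sum_(k | far k) w k * (lo^-1 * (t ^+ 2 * sqnorm2 u + M)).
  by rewrite -mulr_suml; ring.
rewrite mulrA mulr_sumr; apply: ler_sum => k _.
rewrite (_ : t * 2 * _ = w k * (2 * t * bform (S k) u (d k))); last by ring.
apply: ler_wpM2l; first exact: weight_ge0.
apply: le_trans (bform_young t u (d k) (Sigma_mj_sym _ (Om_sym k)) (qform_Sigma_mj_ge0 k)) _.
have [_ qu_le] := qform_Sigma_mj_bounds j lo_gt0 (Om_sym k) (@Om_eig k) u.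
have [_ qd_le] := qform_Sigma_mj_bounds j lo_gt0 (Om_sym k) (@Om_eig k) (d k).
have loV_gt0 : 0 < lo^-1 by rewrite invr_gt0.
have := d_le k; have := sqr_ge0 t; nra.
Qed.

Lemma sqnorm2_minimizer_le bt : constrained_minimizer z Om cl tau j l C0 s bt ->
  sqnorm2 (bt - beta l) * ((nlev z l)%:R * (cl l / tau) / hi) ^+ 2 <=
  4 * lo^-1 ^+ 2 * (\sum_(k | far k) w k) ^+ 2 * (4 * s%:R * (hi ^+ 2 / lo ^+ 2)).
Proof.
move=> bt_min; apply: young_tradeoff_le.
- by rewrite !mulr_gt0 ?divr_gt0 ?invr_gt0 ?ltr0n ?nlev_gt0 ?hi_gt0.
- by rewrite invr_gt0.
- by apply: sumr_ge0 => k _; apply: weight_ge0.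
- exact: sqnorm2_ge0.
- exact: le_trans (weighted_qform_ge _) (minimizer_excess_le bt_min).
- by move=> t t_gt0; apply: weighted_bform_le => // k; apply: sqnorm2_beta_sub_le.
Qed.

Lemma sqnorm2_minimizer_exp_le bt : (nlev z l < n)%N ->
  constrained_minimizer z Om cl tau j l C0 s bt ->
  sqnorm2 (bt - beta l) <= 16 * (hi ^+ 4 / lo ^+ 4) *
    expR (- 2 * delta z l ^+ 2 / tau ^+ 2 + 2 * ln (n%:R / (nlev z l)%:R - 1)) * s%:R.
Proof.
move=> nl_lt bt_min.
have nl_gt0 := nlev_gt0 z l.
have ratio_gt0 : 0 < (n - nlev z l)%:R / (nlev z l)%:R :> R.
  by rewrite divr_gt0 ?ltr0n ?subn_gt0.
have a_gt0 : 0 < (nlev z l)%:R * (cl l / tau) / hi.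
  by rewrite !mulr_gt0 ?ltr0n ?invr_gt0 ?hi_gt0.
rewrite (natr_div_sub1 _ nl_gt0 (ltnW nl_lt)) (expR_two_gap _ _ ratio_gt0).
rewrite -(ler_pM2r (exprn_gt0 2 a_gt0)).
apply: le_trans (sqnorm2_minimizer_le bt_min) _.
set W := \sum_(k | far k) w k; set M := 4 * s%:R * (hi ^+ 2 / lo ^+ 2).
set E := expR _; set nl := nlev z l; set g := cl l / tau.
have W_le : W <= g * E * (n - nl)%:R.
  rewrite -sum_other_level_const; apply: ler_sum => k.
  exact: weight_other_level_le.
have W_ge0 : 0 <= W by apply: sumr_ge0 => k _; apply: weight_ge0.
have W_sq : W ^+ 2 <= (g * E * (n - nl)%:R) ^+ 2.
  by rewrite ler_sqr ?nnegrE // (le_trans W_ge0 W_le).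
rewrite [X in _ <= X](_ : _ = 4 * lo^-1 ^+ 2 * (g * E * (n - nl)%:R) ^+ 2 * M); last first.
  by rewrite /M; field; rewrite !lt0r_neq0 ?ltr0n ?hi_gt0.
have M_ge0 : 0 <= M.
  exact: mulr_ge0 (mulr_ge0 (ler0n _ 4) (ler0n _ s)) (divr_ge0 (sqr_ge0 hi) (sqr_ge0 lo)).
have lo_factor_ge0 : 0 <= 4 * lo^-1 ^+ 2 := mulr_ge0 (ler0n _ 4) (sqr_ge0 _).
apply: (ler_wpM2r M_ge0); exact: (ler_wpM2l lo_factor_ge0).
Qed.

End ConstrainedMinimizer.

Unset Implicit Arguments. Set Strict Implicit.
Theorem lemma2 (R : realType)
  (lam_lo lam_hi C0 delta0 ctau : R)
  (Hlam : 0 < lam_lo) (HC0 : 1 <= C0) (Hdelta0 : 0 < delta0)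
  (Hctau : 0 < ctau) (Hctau1 : ctau < 1) :
  exists c : R, 0 < c /\
  forall (n p : nat) (z : 'I_n -> R) (Om : R -> 'M[R]_p.+1)
         (s : 'I_p.+1 -> nat) (cl : 'I_n -> R) (tau : R),
    (* Assumption T *)
    (forall i : 'I_n, (Om (z i))^T = Om (z i)) ->
    (forall (i : 'I_n) (a : R), eigenvalue (Om (z i)) a ->
        lam_lo <= a /\ a <= lam_hi) ->
    (forall (i : 'I_n) (j : 'I_p.+1), (l0norm (beta_star (Om (z i)) j) <= s j)%N) ->
    (* Assumption W *)
    (forall l : 'I_n, delta0 <= delta z l) ->
    tau = ctau * min_delta z / Num.sqrt (ln n%:R) ->
    (* weights w_l(z_k) = c_l K((z_k - z_l)/tau)/tau, c_l > 0 *)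
    (forall l : 'I_n, 0 < cl l) ->
    forall (j : 'I_p.+1) (l : 'I_n), (nlev z l < n)%N ->
    forall bt : 'rV[R]_p,
      constrained_minimizer z Om cl tau j l C0 (s j) bt ->
      sqnorm2 (bt - beta_star (Om (z l)) j)
        <= c * expR (- 2 * delta z l ^+ 2 / tau ^+ 2
                     + 2 * ln (n%:R / (nlev z l)%:R - 1)) * (s j)%:R.
Proof.
exists (16 * (lam_hi ^+ 4 / lam_lo ^+ 4) + 1); split.
  by rewrite ltr_pwDr // mulr_ge0 // divr_ge0 ?exprn_even_ge0 // ltW // exprn_gt0.
move=> n p z Om s cl tau Om_sym Om_eig beta_sparse delta_ge tau_eq cl_gt0 j l nl_lt bt bt_min.
have tau_gt0 : 0 < tau.
  have n_gt1 : 1 < n%:R :> R by rewrite ltr1n (leq_ltn_trans (nlev_gt0 z l) nl_lt).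
  rewrite tau_eq divr_gt0 ?sqrtr_gt0 ?ln_gt0 // mulr_gt0 //.
  exact: lt_le_trans Hdelta0 (min_delta_ge l delta_ge).
apply: le_trans (sqnorm2_minimizer_exp_le Hlam Om_sym Om_eig (beta_sparse^~ j)
                   tau_gt0 (cl_gt0 l) HC0 nl_lt bt_min) _.
by rewrite ler_wpM2r // ler_wpM2r ?expR_ge0 // lerDl.
Qed.
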